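(* Let $U$ and $V$ be unitary matrices of sizes $N\times N$ and $M\times M$ with no zero entries. Then (a) $\mathbb V_U(1)\otimes\mathbb V_V(1)\subset\mathbb V_{U\otimes V}(1)$, where the left side is the complex span of all $F\otimes G$ with $F\in\mathbb V_U(1)$, $G\in\mathbb V_V(1)$; (b) $i\cdot(\mathrm{Im}\,\mathbb V_U(1)\otimes\mathrm{Im}\,\mathbb V_V(1))\subset\mathrm{Im}\,\mathbb V_{U\otimes V}(1)$, where $\mathrm{Im}\,\mathbb V_U(1)\otimes\mathrm{Im}\,\mathbb V_V(1)$ is the real span of all $F\otimes G$ with $F\in\mathrm{Im}\,\mathbb V_U(1)$, $G\in\mathrm{Im}\,\mathbb V_V(1)$; (c) $\mathbf D(U)\cdot\mathbf D(V)\le\mathbf D(U\otimes V)$. The same holds for more than two factors, where in (b) the multiplier $i$ is replaced by $1$ when the number of factors is odd.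
   Context: $\circ$ is the entrywise product, $\otimes$ the Kronecker product. For unitary $W$ with no zero entries: $\mathcal C_W(F)=(F\circ W)W^*$, $\mathcal D_W(F)=W(\overline F\circ W)^*$, $\mathcal I_W=\mathcal C_W^{-1}\mathcal D_W$; $\mathbb V_W(1)$ is the complex eigenspace of $\mathcal I_W$ for eigenvalue $1$, and $\mathrm{Im}\,\mathbb V_W(1)$ is the real space of its purely imaginary elements. The undephased defect $\mathbf D(W)$ is $\dim_{\mathbb R}\{iR\circ W:\ R\text{ real},\ (iR\circ W)W^*\text{ antihermitian}\}$, which equals $\dim_{\mathbb C}\mathbb V_W(1)=\dim_{\mathbb R}\mathrm{Im}\,\mathbb V_W(1)$. *)

(* Complex scalars: an arbitrary numClosedFieldType C
   (e.g. algC, or complex R for R : rcfType / realType); "real" = Num.real,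
   conjugation = x^*, imaginary unit = 'i. *)
From mathcomp Require Import mxtens.
From HB Require Import structures.
From mathcomp Require Import all_boot all_order all_algebra.
From mathcomp Require Import boolp.
Set Implicit Arguments. Unset Strict Implicit. Unset Printing Implicit Defensive.
Import Order.TTheory GRing.Theory Num.Theory.
Local Open Scope ring_scope.

Section Defs.
Variable C : numClosedFieldType.

Definition adjmx m n (W : 'M[C]_(m, n)) : 'M[C]_(n, m) := (map_mx Num.conj W)^T.

Definition hadamard m n (A B : 'M[C]_(m, n)) : 'M[C]_(m, n) :=
  \matrix_(i, j) (A i j * B i j).

Definition unitary n (W : 'M[C]_n) : Prop :=
  W *m adjmx W = 1%:M /\ adjmx W *m W = 1%:M.

Definition no_zero_entry n (W : 'M[C]_n) : Prop := forall i j, W i j != 0.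

Definition CW n (W : 'M[C]_n) (F : 'M[C]_n) : 'M[C]_n := hadamard F W *m adjmx W.
Definition DW n (W : 'M[C]_n) (F : 'M[C]_n) : 'M[C]_n :=
  W *m adjmx (hadamard (map_mx Num.conj F) W).

(* I_W = C_W^{-1} D_W, with C_W^{-1} computed as the inverse of the matrix of
   the linear map C_W acting on mxvec-coordinates *)
Definition IW n (W : 'M[C]_n) (F : 'M[C]_n) : 'M[C]_n :=
  vec_mx (mxvec (DW W F) *m invmx (lin_mx (CW W))).

Definition V1 n (W : 'M[C]_n) (F : 'M[C]_n) : Prop := IW W F = F.

Definition purely_imaginary m n (F : 'M[C]_(m, n)) : Prop := forall i j, 'Re (F i j) = 0.
Definition ImV1 n (W : 'M[C]_n) (F : 'M[C]_n) : Prop := V1 W F /\ purely_imaginary F.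

(* real dimension of a subset S of 'M[C]_(m,n) (used for real subspaces):
   the largest k such that S contains k elements linearly independent over
   the reals (this is at most 2mn). *)
Definition rfree m n k (F : 'I_k -> 'M[C]_(m, n)) : Prop :=
  forall c : 'I_k -> C, (forall l, c l \is Num.real) ->
    \sum_(l < k) c l *: F l = 0 -> forall l, c l = 0.

Definition rdim m n (S : 'M[C]_(m, n) -> Prop) : nat :=
  \max_(k < (2 * m * n).+1 |
        `[< exists F : 'I_k -> 'M[C]_(m, n), (forall l, S (F l)) /\ rfree F >]) k.

Definition real_mx m n (R : 'M[C]_(m, n)) : Prop := forall i j, R i j \is Num.real.
Definition antihermitian n (X : 'M[C]_n) : Prop := adjmx X = - X.

Definition defect_set n (W : 'M[C]_n) (X : 'M[C]_n) : Prop :=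
  exists R : 'M[C]_n, real_mx R /\ X = hadamard ('i *: R) W /\
                      antihermitian (X *m adjmx W).
Definition defect n (W : 'M[C]_n) : nat := rdim (defect_set W).

End Defs.

Inductive dlist (T : nat -> Type) : seq nat -> Type :=
| dnil : dlist T [::]
| dcons n s : T n -> dlist T s -> dlist T (n :: s).
Arguments dnil {T}.
Arguments dcons {T n s}.

Fixpoint dsize T s (L : dlist T s) : nat :=
  match L with dnil => 0 | dcons _ _ _ L' => (dsize L').+1 end.

Inductive dall (T : nat -> Type) (P : forall n, T n -> Prop) : forall s, dlist T s -> Prop :=
| dall_nil : dall P dnil
| dall_cons n s (x : T n) (L : dlist T s) : P n x -> dall P L -> dall P (dcons x L).

Inductive dall2 (T T' : nat -> Type) (P : forall n, T n -> T' n -> Prop) :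
  forall s, dlist T s -> dlist T' s -> Prop :=
| dall2_nil : dall2 P dnil dnil
| dall2_cons n s (x : T n) (y : T' n) L L' :
    P n x y -> @dall2 T T' P s L L' -> dall2 P (dcons x L) (dcons y L').

Definition sqmx (C : numClosedFieldType) (n : nat) : Type := 'M[C]_n.

Fixpoint tens_list (C : numClosedFieldType) s (L : dlist (sqmx C) s) : 'M[C]_(foldr muln 1 s) :=
  match L in dlist _ s return 'M[C]_(foldr muln 1 s) with
  | dnil => 1%:M
  | dcons n s' A L' => tensmx (A : 'M[C]_n) (tens_list L')
  end.

Fixpoint defect_prod (C : numClosedFieldType) s (L : dlist (sqmx C) s) : nat :=
  match L with
  | dnil => 1
  | dcons n s' A L' => (@defect C n A * defect_prod L')%N
  end.

(* I_W F = F is equivalent to D_W F = C_W F, because C_W is injective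
   (W^* W = 1 and W has no zero entry).  Both C and D are multiplicative for
   Kronecker products, so Kronecker products of fixed points are fixed points,
   and so are their linear combinations.  A matrix is real or purely imaginary
   according as conj A = A or conj A = -A; these signs multiply under tensor
   products, so a product of p purely imaginary matrices has sign (-1)^p, which
   the factor i (p even) or 1 (p odd) turns back into -1.
   An element of the defect set of W has the form (iR) o W with R real.  If
   (iR_j) o U and (iS_k) o V are real bases of the defect sets of U and V, then
   i ((iR_j) o U (x) (iS_k) o V) = (-i (R_j (x) S_k)) o (U (x) V) lies in the
   defect set of U (x) V, and these are real independent because the R_j (x) S_k
   are: a real relation among them yields, entry by entry, real relations among
   the S_k and then among the R_j. *)

From mathcomp Require Import mxtens.
From HB Require Import structures.
From mathcomp Require Import all_boot all_order all_algebra.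
From mathcomp Require Import boolp ring.
Import Order.TTheory GRing.Theory Num.Theory.
Local Open Scope ring_scope.
Set Implicit Arguments. Unset Strict Implicit. Unset Printing Implicit Defensive.

Lemma dall_impl T (P Q : forall n, T n -> Prop) s (L : dlist T s) :
  (forall n x, P n x -> Q n x) -> dall P L -> dall Q L.
Proof. by move=> PQ; elim=> [|n s' x L' Px _ IH]; constructor; auto. Qed.

Lemma dall2_impl T T' (P Q : forall n, T n -> T' n -> Prop) s (L : dlist T s) (L' : dlist T' s) :
  (forall n x y, P n x y -> Q n x y) -> dall2 P L L' -> dall2 Q L L'.
Proof. by move=> PQ; elim=> [|n s' x y M M' Pxy _ IH]; constructor; auto. Qed.

Lemma dall_inv T (P : forall n, T n -> Prop) s (L : dlist T s) : dall P L ->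
  match L with dnil => True | dcons n s' x L' => P n x /\ dall P L' end.
Proof. by case. Qed.

Section TensorDefect.
Variable C : numClosedFieldType.

Lemma adjmx_tens m n p q (A : 'M[C]_(m, n)) (B : 'M[C]_(p, q)) :
  adjmx (A *t B) = adjmx A *t adjmx B.
Proof. by rewrite /adjmx map_mxT trmx_tens. Qed.

Lemma hadamard_tens m n p q (A A' : 'M[C]_(m, n)) (B B' : 'M[C]_(p, q)) :
  hadamard (A *t B) (A' *t B') = hadamard A A' *t hadamard B B'.
Proof. by apply/matrixP=> i j; rewrite !mxE; ring. Qed.

Lemma tens1mx1 n m : (1%:M : 'M[C]_n) *t (1%:M : 'M[C]_m) = 1%:M.
Proof.
apply/matrixP=> i j; case: (mxtens_indexP i) => i1 i2; case: (mxtens_indexP j) => j1 j2.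
by rewrite tensmxE !mxE (can_eq (@mxtens_indexK _ _)) xpair_eqE -natrM mulnb.
Qed.

Lemma unitary_tens n m (U : 'M[C]_n) (V : 'M[C]_m) :
  unitary U -> unitary V -> unitary (U *t V).
Proof.
by case=> U1 U2 [V1 V2]; split; rewrite adjmx_tens tensmx_mul ?U1 ?U2 ?V1 ?V2 tens1mx1.
Qed.

Lemma no_zero_entry_tens n m (U : 'M[C]_n) (V : 'M[C]_m) :
  no_zero_entry U -> no_zero_entry V -> no_zero_entry (U *t V).
Proof.
move=> nzU nzV i j; case: (mxtens_indexP i) => i1 i2; case: (mxtens_indexP j) => j1 j2.
by rewrite tensmxE mulf_neq0.
Qed.

Lemma CW_tens n m (U F : 'M[C]_n) (V G : 'M[C]_m) :
  CW (U *t V) (F *t G) = CW U F *t CW V G.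
Proof. by rewrite /CW hadamard_tens adjmx_tens tensmx_mul. Qed.

Lemma DW_tens n m (U F : 'M[C]_n) (V G : 'M[C]_m) :
  DW (U *t V) (F *t G) = DW U F *t DW V G.
Proof. by rewrite /DW map_mxT hadamard_tens adjmx_tens tensmx_mul. Qed.

Section FixedSpace.
Variables (n : nat) (W : 'M[C]_n).

Lemma CW_is_linear : linear (CW W).
Proof.
move=> a A B; apply/matrixP=> i j; rewrite /CW !mxE big_distrr -big_split /=.
by apply: eq_bigr => k _; rewrite !mxE; ring.
Qed.
HB.instance Definition _ := GRing.isLinear.Build C 'M[C]_n 'M[C]_n _ (CW W) CW_is_linear.

Lemma DW_is_linear : linear (DW W).
Proof.
move=> a A B; apply/matrixP=> i j; rewrite /DW !mxE big_distrr -big_split /=.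
by apply: eq_bigr => k _; rewrite !mxE /= !(rmorphM, rmorphD) /= !conjCK; ring.
Qed.
HB.instance Definition _ := GRing.isLinear.Build C 'M[C]_n 'M[C]_n _ (DW W) DW_is_linear.

Lemma IW_is_linear : linear (IW W).
Proof. by move=> a A B; rewrite /IW !linearP /= mulmxDl -scalemxAl linearP. Qed.
HB.instance Definition _ := GRing.isLinear.Build C 'M[C]_n 'M[C]_n _ (IW W) IW_is_linear.

Lemma V1_lincomb k (c : 'I_k -> C) (X : 'I_k -> 'M[C]_n) :
  (forall l, V1 W (X l)) -> V1 W (\sum_(l < k) c l *: X l).
Proof. by move=> VX; rewrite /V1 linear_sum; apply: eq_bigr => l _; rewrite linearZ /= VX. Qed.

Lemma V1Z a F : V1 W F -> V1 W (a *: F).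
Proof. by rewrite /V1 linearZ /= => ->. Qed.

Hypotheses (Wu : unitary W) (Wnz : no_zero_entry W).

(* [(F o W) W^* W = F o W], and the Hadamard factor [W] can be cancelled entrywise. *)
Lemma CW_inj : injective (CW W).
Proof.
apply: raddf_inj => F /(congr1 (mulmx^~ W)); rewrite mul0mx /CW -mulmxA Wu.2 mulmx1.
move=> /matrixP FW0; apply/matrixP=> i j; have /eqP := FW0 i j.
by rewrite !mxE mulf_eq0 (negbTE (Wnz i j)) orbF => /eqP.
Qed.

Lemma lin_mx_CW_unit : lin_mx (CW W) \in unitmx.
Proof.
rewrite -row_free_unit; apply: inj_row_free => v.
rewrite -[v]vec_mxK mul_vec_lin -(linear0 (mxvec : 'M[C]_n -> _)) => /(can_inj mxvecK).
by rewrite -(linear0 (CW W)) => /CW_inj ->; rewrite linear0.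
Qed.

Lemma V1P F : V1 W F <-> DW W F = CW W F.
Proof.
rewrite /V1 /IW; split=> [IWF | ->]; last by rewrite -mul_vec_lin mulmxK ?lin_mx_CW_unit ?mxvecK.
apply: (can_inj mxvecK); rewrite -[in RHS]mul_vec_lin -[F in RHS]IWF vec_mxK.
by rewrite mulmxKV ?lin_mx_CW_unit.
Qed.

End FixedSpace.

Lemma V1_tens n m (U F : 'M[C]_n) (V G : 'M[C]_m) :
  unitary U -> no_zero_entry U -> unitary V -> no_zero_entry V ->
  V1 U F -> V1 V G -> V1 (U *t V) (F *t G).
Proof.
move=> Uu Unz Vu Vnz; rewrite (V1P Uu Unz) (V1P Vu Vnz).
rewrite (V1P (unitary_tens Uu Vu) (no_zero_entry_tens Unz Vnz)) => DFC DGC.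
by rewrite DW_tens CW_tens DFC DGC.
Qed.

Definition conj_sign m n (b : bool) (A : 'M[C]_(m, n)) : Prop :=
  map_mx Num.conj A = (-1) ^+ b *: A.

Lemma purely_imaginaryE m n (A : 'M[C]_(m, n)) :
  purely_imaginary A <-> conj_sign true A.
Proof.
have Re0E (x : C) : ('Re x == 0) = (x^* == - x).
  by rewrite ReE mulf_eq0 invr_eq0 pnatr_eq0 orbF addrC addr_eq0.
split=> [A_im | /matrixP A_im i j].
  by apply/matrixP=> i j; rewrite !mxE expr1 mulN1r; apply/eqP; rewrite -Re0E A_im.
by apply/eqP; rewrite Re0E; have := A_im i j; rewrite !mxE expr1 mulN1r => ->.
Qed.

Lemma conj_sign_tens m n p q (a b : bool) (A : 'M[C]_(m, n)) (B : 'M[C]_(p, q)) :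
  conj_sign a A -> conj_sign b B -> conj_sign (a (+) b) (A *t B).
Proof.
move=> /matrixP Aa /matrixP Bb; apply/matrixP=> i j.
case: (mxtens_indexP i) => i1 i2; case: (mxtens_indexP j) => j1 j2.
have := Aa i1 j1; have := Bb i2 j2; rewrite !mxE !mxtens_indexK /= rmorphM /= => -> ->.
by rewrite signr_addb; ring.
Qed.

Lemma conj_signZ m n (a b : bool) (c : C) (A : 'M[C]_(m, n)) :
  c^* = (-1) ^+ a * c -> conj_sign b A -> conj_sign (a (+) b) (c *: A).
Proof.
by rewrite /conj_sign map_mxZ /= => -> ->; rewrite !scalerA signr_addb mulrAC.
Qed.

Lemma conj_sign_lincomb m n (b : bool) k (c : 'I_k -> C) (X : 'I_k -> 'M[C]_(m, n)) :
  (forall l, c l \is Num.real) -> (forall l, conj_sign b (X l)) ->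
  conj_sign b (\sum_(l < k) c l *: X l).
Proof.
move=> c_real Xb; rewrite /conj_sign raddf_sum scaler_sumr; apply: eq_bigr => l _.
by apply: (conj_signZ (a := false)) => //; rewrite conj_Creal ?mul1r.
Qed.

Lemma conj_sign1 n : conj_sign false (1%:M : 'M[C]_n).
Proof. by rewrite /conj_sign map_mx1 scale1r. Qed.

Lemma big_mxtens_index (V : nmodType) a b (F : 'I_(a * b) -> V) :
  \sum_(x < a * b) F x = \sum_(j < a) \sum_(k < b) F (mxtens_index (j, k)).
Proof.
rewrite pair_big (reindex (@mxtens_unindex a b)) /=.
  by apply: eq_bigr => x _; rewrite mxtens_unindexK.
by exists (@mxtens_index a b) => x _; rewrite (mxtens_indexK, mxtens_unindexK).
Qed.

Lemma leq_rdim m n (S : 'M[C]_(m, n) -> Prop) k (F : 'I_k -> 'M[C]_(m, n)) :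
  (k <= 2 * m * n)%N -> (forall l, S (F l)) -> rfree F -> (k <= rdim S)%N.
Proof.
rewrite -ltnS => k_small SF freeF.
apply: (@leq_bigmax_cond _ _ (fun i : 'I_(2 * m * n).+1 => nat_of_ord i) (Ordinal k_small)).
by apply/asboolP; exists F.
Qed.

Lemma rdim_witness m n (S : 'M[C]_(m, n) -> Prop) :
  exists F : 'I_(rdim S) -> 'M[C]_(m, n), (forall l, S (F l)) /\ rfree F.
Proof.
have S0 : `[< exists F : 'I_(@ord0 (2 * m * n)) -> 'M[C]_(m, n), (forall l, S (F l)) /\ rfree F >].
  by apply/asboolP; exists (fun _ => 0); split=> [[] | c _ _ []].
rewrite /rdim (@bigop.bigmax_eq_arg _ ord0 _ (fun i : 'I_(2 * m * n).+1 => nat_of_ord i) S0).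
by case: arg_maxnP => // i /asboolP.
Qed.

Lemma hadamardZ_lincomb m n k (a : C) (d : 'I_k -> C) (X : 'I_k -> 'M[C]_(m, n)) W :
  \sum_(l < k) d l *: hadamard (a *: X l) W = hadamard (a *: \sum_(l < k) d l *: X l) W.
Proof.
apply/matrixP=> i j; rewrite !mxE !summxE big_distrr big_distrl /=.
by apply: eq_bigr => l _; rewrite !mxE; ring.
Qed.

Lemma rfree_hadamardZ n k (a : C) (X : 'I_k -> 'M[C]_n) W :
  a != 0 -> no_zero_entry W -> rfree (fun l => hadamard (a *: X l) W) <-> rfree X.
Proof.
move=> a_nz Wnz; suff eq0E d : \sum_(l < k) d l *: hadamard (a *: X l) W = 0 <->
                                \sum_(l < k) d l *: X l = 0.
  by split=> freeX d d_real /eq0E; apply: freeX.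
rewrite hadamardZ_lincomb; split=> [/matrixP hadW0 | ->]; last first.
  by apply/matrixP=> i j; rewrite !mxE mulr0 mul0r.
apply/matrixP=> i j; have /eqP := hadW0 i j.
by rewrite !mxE !mulf_eq0 (negbTE a_nz) (negbTE (Wnz i j)) orbF => /eqP.
Qed.

(* The real and the imaginary parts of the coefficients give two real relations. *)
Lemma rfree_real_mx_free m n k (R : 'I_k -> 'M[C]_(m, n)) :
  (forall l, real_mx (R l)) -> rfree R ->
  forall v : 'I_k -> C, \sum_(l < k) v l *: R l = 0 -> forall l, v l = 0.
Proof.
move=> R_real freeR v /matrixP vR0.
have part (f : {additive C -> C}) :
    (forall x y, y \is Num.real -> f (x * y) = f x * y) ->
    \sum_(l < k) f (v l) *: R l = 0.
  move=> fMr; apply/matrixP=> i j; have := congr1 f (vR0 i j).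
  rewrite summxE mxE raddf0 raddf_sum => fvR0; rewrite summxE ?mxE -[RHS]fvR0.
  by apply: eq_bigr => l _; rewrite !mxE fMr ?R_real.
move=> l; rewrite [v l]Crect.
rewrite (freeR _ (fun l => Creal_Re _) (part _ (fun x _ y_real => ReMr y_real x))).
by rewrite (freeR _ (fun l => Creal_Im _) (part _ (fun x _ y_real => ImMr y_real x))) mulr0 addr0.
Qed.

Lemma rfree_real_mx_card m n k (R : 'I_k -> 'M[C]_(m, n)) :
  (forall l, real_mx (R l)) -> rfree R -> (k <= m * n)%N.
Proof.
move=> R_real freeR; pose A := \matrix_(l < k) mxvec (R l).
suff /eqP <- : row_free A by apply: rank_leq_col.
apply: inj_row_free => v vA0; apply/rowP => l; rewrite mxE.
apply: (rfree_real_mx_free R_real freeR) => //; apply: (can_inj mxvecK).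
rewrite linear0 linear_sum /= -[RHS]vA0 mulmx_sum_row.
by apply: eq_bigr => l' _; rewrite linearZ /= rowK.
Qed.

Lemma rfree_tens m n p q a b (R : 'I_a -> 'M[C]_(m, n)) (S : 'I_b -> 'M[C]_(p, q)) :
  (forall j, real_mx (R j)) -> rfree R -> rfree S ->
  rfree (fun x : 'I_(a * b) => R (mxtens_unindex x).1 *t S (mxtens_unindex x).2).
Proof.
move=> R_real freeR freeS c c_real /matrixP cRS0.
have cRS0_entry i1 i2 j1 j2 :
    \sum_(j < a) \sum_(k < b) c (mxtens_index (j, k)) * (R j i1 j1 * S k i2 j2) = 0.
  have := cRS0 (mxtens_index (i1, i2)) (mxtens_index (j1, j2)).
  rewrite summxE big_mxtens_index mxE => cRS0_ij; rewrite -[RHS]cRS0_ij.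
  by apply: eq_bigr => j _; apply: eq_bigr => k _; rewrite !mxE !mxtens_indexK.
have cR0 i1 j1 k : \sum_(j < a) c (mxtens_index (j, k)) * R j i1 j1 = 0.
  apply: (freeS (fun k => \sum_(j < a) c (mxtens_index (j, k)) * R j i1 j1)) => [k'|].
    by apply: rpred_sum => j _; rewrite rpredM ?R_real.
  apply/matrixP=> i2 j2; rewrite summxE mxE -[RHS](cRS0_entry i1 i2 j1 j2) exchange_big /=.
  by apply: eq_bigr => k' _; rewrite mxE big_distrl; apply: eq_bigr => j _; rewrite mulrA.
move=> x; case: (mxtens_indexP x) => j k; apply: (freeR (fun j => c (mxtens_index (j, k)))) => //.
apply/matrixP=> i1 j1; rewrite summxE mxE -[RHS](cR0 i1 j1 k).
by apply: eq_bigr => j' _; rewrite mxE.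
Qed.

Lemma antihermitian_tens m n (A : 'M[C]_m) (B : 'M[C]_n) :
  antihermitian A -> antihermitian B -> antihermitian ('i *: (A *t B)).
Proof.
rewrite /antihermitian => /matrixP A_ah /matrixP B_ah.
have A_ah' i j : (A j i)^* = - A i j by have := A_ah i j; rewrite !mxE.
have B_ah' i j : (B j i)^* = - B i j by have := B_ah i j; rewrite !mxE.
apply/matrixP=> i j; case: (mxtens_indexP i) => i1 i2; case: (mxtens_indexP j) => j1 j2.
by rewrite !mxE !mxtens_indexK /= !rmorphM /= conjCi A_ah' B_ah'; ring.
Qed.

Lemma defect_set_tens n m (U X : 'M[C]_n) (V Y : 'M[C]_m) :
  defect_set U X -> defect_set V Y -> defect_set (U *t V) ('i *: (X *t Y)).
Proof.
move=> [R [R_real [-> XU_ah]]] [S [S_real [-> YV_ah]]].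
exists (('i * 'i) *: (R *t S)); split; [|split].
- move=> i j; case: (mxtens_indexP i) => i1 i2; case: (mxtens_indexP j) => j1 j2.
  by rewrite mxE tensmxE mulCii rpredM ?rpredN1 ?rpredM ?R_real ?S_real.
- apply/matrixP=> i j; case: (mxtens_indexP i) => i1 i2; case: (mxtens_indexP j) => j1 j2.
  by rewrite !mxE !mxtens_indexK /=; ring.
- by rewrite -scalemxAl adjmx_tens tensmx_mul; apply: antihermitian_tens.
Qed.

Lemma defect_tens n m (U : 'M[C]_n) (V : 'M[C]_m) :
  no_zero_entry U -> no_zero_entry V -> (defect U * defect V <= defect (U *t V))%N.
Proof.
move=> Unz Vnz; rewrite /defect.
have [F [F_def freeF]] := rdim_witness (defect_set U).
have [G [G_def freeG]] := rdim_witness (defect_set V).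
have [R R_spec] := choice F_def; have [S S_spec] := choice G_def.
have R_real j : real_mx (R j) by case: (R_spec j).
have S_real k : real_mx (S k) by case: (S_spec k).
have FE j : F j = hadamard ('i *: R j) U by case: (R_spec j) => _ [].
have GE k : G k = hadamard ('i *: S k) V by case: (S_spec k) => _ [].
have freeR : rfree R by rewrite -(rfree_hadamardZ _ (neq0Ci C) Unz); under eq_fun do rewrite -FE.
have freeS : rfree S by rewrite -(rfree_hadamardZ _ (neq0Ci C) Vnz); under eq_fun do rewrite -GE.
have HE x : 'i *: (F (mxtens_unindex x).1 *t G (mxtens_unindex x).2) =
    hadamard (('i * ('i * 'i)) *: (R (mxtens_unindex x).1 *t S (mxtens_unindex x).2)) (U *t V).
  by rewrite FE GE; apply/matrixP=> i j; rewrite !mxE; ring.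
apply: (leq_rdim (F := fun x => 'i *: (F (mxtens_unindex x).1 *t G (mxtens_unindex x).2))).
- apply: leq_trans (leq_mul (rfree_real_mx_card R_real freeR) (rfree_real_mx_card S_real freeS)) _.
  by rewrite mulnACA -[(2 * _ * _)%N]mulnA leq_pmull.
- by move=> x; apply: defect_set_tens.
rewrite (funext HE); apply/rfree_hadamardZ; first by rewrite !mulf_neq0 ?neq0Ci.
  exact: no_zero_entry_tens.
exact: rfree_tens.
Qed.

Lemma unitary1 n : unitary (1%:M : 'M[C]_n).
Proof.
have adj1 : adjmx (1%:M : 'M[C]_n) = 1%:M by rewrite /adjmx map_mx1 trmx1.
by rewrite /unitary adj1 mulmx1.
Qed.

Lemma no_zero_entry_size1 : no_zero_entry (1%:M : 'M[C]_1).
Proof. by move=> i j; rewrite !ord1 mxE eqxx oner_neq0. Qed.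

Lemma V1_size1 (X : 'M[C]_1) : V1 1%:M X.
Proof.
apply/(V1P (unitary1 1) no_zero_entry_size1); apply/matrixP=> i j.
by rewrite !ord1 !mxE !big_ord1 !mxE /= !rmorphM /= conjCK; ring.
Qed.

Lemma defect_size1 : (1 <= defect (1%:M : 'M[C]_1))%N.
Proof.
apply: (@leq_rdim _ _ _ 1 (fun _ => hadamard ('i *: 1%:M) 1%:M)) => //.
- move=> _; exists 1%:M; split; first by move=> i j; rewrite mxE realn.
  split=> //; apply/matrixP=> i j.
  by rewrite !ord1 !mxE !big_ord1 !mxE /= !rmorphM /= conjCi !rmorph1; ring.
- move=> c _; rewrite big_ord1 => /matrixP /(_ ord0 ord0); rewrite !mxE /= !mulr1 => /eqP.
  by rewrite mulf_eq0 (negbTE (neq0Ci C)) orbF => /eqP c0 l; rewrite ord1.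
Qed.

Lemma tens_list_unitary s (Us : dlist (sqmx C) s) :
  dall (fun n (W : sqmx C n) => unitary W) Us -> unitary (tens_list Us).
Proof. by elim=> [|n s' W L Wu _ Lu] /=; [apply: unitary1 | apply: unitary_tens]. Qed.

Lemma tens_list_no_zero_entry s (Us : dlist (sqmx C) s) :
  dall (fun n (W : sqmx C n) => no_zero_entry W) Us -> no_zero_entry (tens_list Us).
Proof.
by elim=> [|n s' W L Wnz _ Lnz] /=; [apply: no_zero_entry_size1 | apply: no_zero_entry_tens].
Qed.

Lemma tens_list_V1 s (Us Fs : dlist (sqmx C) s) :
  dall (fun n (W : sqmx C n) => unitary W) Us ->
  dall (fun n (W : sqmx C n) => no_zero_entry W) Us ->
  dall2 (fun n (W F : sqmx C n) => V1 W F) Us Fs -> V1 (tens_list Us) (tens_list Fs).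
Proof.
move=> + + VF; elim: VF => [|n s' W F L L' WF _ IH] /=; first by move=> _ _; apply: V1_size1.
move=> /dall_inv[Wu Lu] /dall_inv[Wnz Lnz].
exact: V1_tens Wu Wnz (tens_list_unitary Lu) (tens_list_no_zero_entry Lnz) WF (IH Lu Lnz).
Qed.

Lemma tens_list_conj_sign s (Us Fs : dlist (sqmx C) s) :
  dall2 (fun n (W F : sqmx C n) => ImV1 W F) Us Fs ->
  conj_sign (odd (size s)) (tens_list Fs).
Proof.
elim=> [|n s' W F L L' [_ /purely_imaginaryE F_im] _ IH] /=; first exact: conj_sign1.
exact: conj_sign_tens F_im IH.
Qed.

Lemma defect_prod_le s (Us : dlist (sqmx C) s) :
  dall (fun n (W : sqmx C n) => no_zero_entry W) Us ->
  (defect_prod Us <= defect (tens_list Us))%N.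
Proof.
elim=> [|n s' W L Wnz Lnz IH] /=; first exact: defect_size1.
exact: leq_trans (leq_mul (leqnn _) IH) (defect_tens Wnz (tens_list_no_zero_entry Lnz)).
Qed.

End TensorDefect.

Theorem corollary3p14 (C : numClosedFieldType) :
  (forall (N M : nat) (U : 'M[C]_N) (V : 'M[C]_M),
     unitary U -> no_zero_entry U -> unitary V -> no_zero_entry V ->
     (forall (k : nat) (c : 'I_k -> C) (F : 'I_k -> 'M[C]_N) (G : 'I_k -> 'M[C]_M),
        (forall l, V1 U (F l)) -> (forall l, V1 V (G l)) ->
        V1 (tensmx U V) (\sum_(l < k) c l *: tensmx (F l) (G l)))
     /\
     (forall (k : nat) (c : 'I_k -> C) (F : 'I_k -> 'M[C]_N) (G : 'I_k -> 'M[C]_M),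
        (forall l, c l \is Num.real) ->
        (forall l, ImV1 U (F l)) -> (forall l, ImV1 V (G l)) ->
        ImV1 (tensmx U V) ('i *: \sum_(l < k) c l *: tensmx (F l) (G l)))
     /\
     (defect U * defect V <= defect (tensmx U V))%N)
  /\
  (forall (s : seq nat) (Us : dlist (sqmx C) s),
     (2 <= size s)%N ->
     dall (fun n (W : sqmx C n) => unitary (W : 'M[C]_n) /\ no_zero_entry (W : 'M[C]_n)) Us ->
     (forall (k : nat) (c : 'I_k -> C) (Fs : 'I_k -> dlist (sqmx C) s),
        (forall l, dall2 (fun n (W F : sqmx C n) => V1 (W : 'M[C]_n) F) Us (Fs l)) ->
        V1 (tens_list Us) (\sum_(l < k) c l *: tens_list (Fs l)))
     /\
     (forall (k : nat) (c : 'I_k -> C) (Fs : 'I_k -> dlist (sqmx C) s),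
        (forall l, c l \is Num.real) ->
        (forall l, dall2 (fun n (W F : sqmx C n) => ImV1 (W : 'M[C]_n) F) Us (Fs l)) ->
        ImV1 (tens_list Us)
          ((if odd (size s) then 1 else 'i) *: \sum_(l < k) c l *: tens_list (Fs l)))
     /\
     (defect_prod Us <= defect (tens_list Us))%N).
Proof.
have conj_sign_i : 'i^* = (-1) ^+ true * 'i :> C by rewrite conjCi mulN1r.
split=> [N M U V Uu Unz Vu Vnz | s Us _ UsP].
  split; [|split].
  - by move=> k c F G VF VG; apply: V1_lincomb => l; apply: V1_tens.
  - move=> k c F G c_real ImF ImG; split.
      by apply/V1Z/V1_lincomb => l; apply: V1_tens => //; [case: (ImF l) | case: (ImG l)].
    apply/purely_imaginaryE; apply: (conj_signZ (b := false) conj_sign_i).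
    apply: conj_sign_lincomb => // l; apply: (conj_sign_tens (a := true) (b := true)).
      by apply/purely_imaginaryE; case: (ImF l).
    by apply/purely_imaginaryE; case: (ImG l).
  - exact: defect_tens.
have Uu := dall_impl (fun n W (WP : unitary W /\ no_zero_entry W) => WP.1) UsP.
have Unz := dall_impl (fun n W (WP : unitary W /\ no_zero_entry W) => WP.2) UsP.
split; [|split].
- by move=> k c Fs VFs; apply: V1_lincomb => l; apply: tens_list_V1.
- move=> k c Fs c_real ImFs; split.
    apply/V1Z/V1_lincomb => l; apply: tens_list_V1 Uu Unz _.
    by apply: dall2_impl (ImFs l) => n W F [].
  have := conj_sign_lincomb c_real (fun l => tens_list_conj_sign (ImFs l)).
  rewrite purely_imaginaryE; case: (odd (size s)) => sum_sign.
    by apply: (conj_signZ (a := false)) sum_sign; rewrite rmorph1 mul1r.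
  exact: conj_signZ conj_sign_i sum_sign.
- exact: defect_prod_le.
Qed.
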